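(* Let $n\ge 3$ and $1\le k\le n-2$. Then $n-k-1$ is an eigenvalue of the adjacency matrix of $X[k]$ with multiplicity at least $\binom{n-2}{k}$.
   Context: $T_n=\{(1\,2),\dots,(1\,n)\}$. $X[k]$ is the Schreier coset graph $X(S_n,S'_{n-k},T_n)$, where $S'_{n-k}\le S_n$ is the subgroup fixing $n-k+1,\dots,n$ pointwise; equivalently, $X[k]$ is the multigraph whose vertices are the $k$-tuples of pairwise distinct elements of $[n]$, with, for each vertex $(i_1,\dots,i_k)$ and each $t\in T_n$, an edge joining it to $(t(i_1),\dots,t(i_k))$ (a loop if equal). Its adjacency matrix $A$ has $A_{x,y}=\#\{t\in T_n : t(x)=y\}$, where $t$ acts entrywise on tuples; in particular each loop contributes $1$ to the diagonal entry. *)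

From HB Require Import structures.
From mathcomp Require Import all_boot all_order all_algebra all_fingroup.
Set Implicit Arguments. Unset Strict Implicit. Unset Printing Implicit Defensive.
Import GRing.Theory Num.Theory.
Local Open Scope ring_scope.

(* [n] is modelled by 'I_n = {0,...,n-1}; the point "1" of the paper is the
   ordinal with value 0.  Vertices of X[k]: k-tuples of pairwise distinct
   elements of [n]. *)
Definition vert (n k : nat) : {set k.-tuple 'I_n} := [set t : k.-tuple 'I_n | uniq t].

(* A_{x,y} = #{ t in T_n : t(x) = y }, with T_n = {(a j) : j <> a} where a is
   the point with value 0 (the paper's point 1); t acts entrywise. *)
Definition adj_entry (n k : nat) (x y : k.-tuple 'I_n) : nat :=
  (\sum_(a : 'I_n | val a == 0%N) \sum_(j : 'I_n | val j != 0%N)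
      (map (tperm a j) x == y :> seq 'I_n))%N.

Definition adjX (n k : nat) : 'M[rat]_#|vert n k| :=
  \matrix_(i, j) (adj_entry (enum_val i : k.-tuple 'I_n) (enum_val j))%:R.

From HB Require Import structures.
From mathcomp Require Import all_boot all_order all_algebra all_fingroup.
From mathcomp Require Import zify.
Import GRing.Theory Num.Theory.
Set Implicit Arguments. Unset Strict Implicit. Unset Printing Implicit Defensive.

(* Write 0 for the paper's point 1 and let cv : 'I_(k+1) -> [n] avoid 0.  For a
   sequence x of length k, the pattern matrix of x has as row r < k the
   indicator of x_r among the labels cv c, and as last row all ones; its
   determinant F(x) vanishes when some x_r is not a label (zero row) or when
   two entries coincide (equal rows), and it is linear in each row.  The
   averaging identity  sum_{j <> 0} F((0 j) y) = (n - k - 1) F(y)  follows by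
   distinguishing whether 0 occurs in y: if not, the swaps fix y or create a
   zero row; if 0 = y_i, the swaps substitute y_i by the points outside y,
   and the sum over all substitutions is a determinant with two all-ones
   rows.  Since ((0 j) x = y iff x = (0 j) y), the identity says that F is a
   left eigenvector of the adjacency matrix.  Finally, for each k-subset S of
   [n] \ {0, 1}, the labels "elements of S, then 1" give an eigenvector F_S
   with F_S(S) = 1 (unitriangular matrix) and F_S(T) = 0 for T <> S, so these
   'C(n - 2, k) eigenvectors are linearly independent. *)

Section RowSubstitution.
Local Open Scope ring_scope.
Variables (R : comNzRingType) (m : nat).
Implicit Types (A : 'M[R]_m) (v : 'rV[R]_m).

Definition row_subst A (i : 'I_m) v : 'M[R]_m :=
  \matrix_(r, c) (if r == i then v 0 c else A r c).

Lemma det_row_subst A i v : \det (row_subst A i v) = \sum_c v 0 c * cofactor A i c.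
Proof.
rewrite (expand_det_row _ i); apply: eq_bigr => c _; rewrite mxE eqxx.
congr (_ * (_ * \det _)); apply/matrixP => r c'.
by rewrite !mxE eq_sym (negbTE (neq_lift _ _)).
Qed.

Lemma det_row_subst_sum (I : finType) A i (v : I -> 'rV[R]_m) :
  \sum_j \det (row_subst A i (v j)) = \det (row_subst A i (\sum_j v j)).
Proof.
under eq_bigr do rewrite det_row_subst.
rewrite det_row_subst exchange_big; apply: eq_bigr => c _.
by rewrite summxE mulr_suml.
Qed.

Lemma det_row0 A i : (forall c, A i c = 0) -> \det A = 0.
Proof. by move=> Ai0; rewrite (expand_det_row _ i) big1 // => c _; rewrite Ai0 mul0r. Qed.

End RowSubstitution.

Lemma map_tperm_set_nth (T : finType) (x0 : T) (y : seq T) i j :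
  uniq y -> (i < size y)%N -> j \notin y ->
  map (tperm (nth x0 y i) j) y = set_nth x0 y i j.
Proof.
move=> uy iy jy; apply: (@eq_from_nth _ x0) => [|r].
  by rewrite size_map size_set_nth; apply/esym/maxn_idPr.
rewrite size_map => ry; rewrite (nth_map x0) // nth_set_nth /=.
have [->|rni] := eqVneq r i; first exact: tpermL.
apply: tpermD; first by rewrite nth_uniq // eq_sym.
by apply: contraNneq jy => ->; rewrite mem_nth.
Qed.

Section PatternDeterminant.
Local Open Scope ring_scope.
Variables (R : comNzRingType) (n k : nat) (z0 : 'I_n) (cv : 'I_k.+1 -> 'I_n).
Hypothesis cv_neq0 : forall c, cv c != z0.

Definition ind_row (a : 'I_n) : 'rV[R]_k.+1 := \row_c (a == cv c)%:R.

Definition pattern_mx (x : seq 'I_n) : 'M[R]_k.+1 :=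
  \matrix_(r, c) (if (r < k)%N then (nth z0 x r == cv c)%:R else 1).

Definition pattern_det (x : seq 'I_n) : R := \det (pattern_mx x).

Lemma pattern_det_out x r :
  (r < k)%N -> (forall c, cv c != nth z0 x r) -> pattern_det x = 0.
Proof.
move=> rk x_out; apply: (@det_row0 _ _ _ (Ordinal (leqW rk))) => c.
by rewrite mxE /= rk eq_sym (negbTE (x_out c)).
Qed.

Lemma pattern_det_z0 x r : (r < k)%N -> nth z0 x r = z0 -> pattern_det x = 0.
Proof. by move=> rk xr; apply: (pattern_det_out rk) => c; rewrite xr. Qed.

Lemma pattern_det_rep x r1 r2 : r1 != r2 -> (r1 < k)%N -> (r2 < k)%N ->
  nth z0 x r1 = nth z0 x r2 -> pattern_det x = 0.
Proof.
move=> r12 r1k r2k x12.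
have r12' : Ordinal (leqW r1k) != Ordinal (leqW r2k) by rewrite -val_eqE.
by apply: (determinant_alternate r12') => c; rewrite !mxE /= r1k r2k x12.
Qed.

(* Summing over all values of the i-th entry turns row i into the all-ones
   row, which repeats the last row. *)
Lemma pattern_det_subst_sum (y : seq 'I_n) i : (i < k)%N ->
  \sum_j pattern_det (set_nth z0 y i j) = 0.
Proof.
move=> ik; pose i' : 'I_k.+1 := Ordinal (leqW ik).
have i_neq_max : i' != ord_max by rewrite -val_eqE /= ltn_eqF.
have subst j : pattern_mx (set_nth z0 y i j) = row_subst (pattern_mx y) i' (ind_row j).
  apply/matrixP => r c; rewrite !mxE nth_set_nth /=.
  case: (eqVneq r i') => [->|rni]; rewrite ?eqxx ?ik //.
  by rewrite (negbTE (rni : (r : nat) != i)).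
rewrite /pattern_det; under eq_bigr do rewrite subst.
rewrite det_row_subst_sum; apply: (determinant_alternate i_neq_max) => c.
rewrite !mxE eqxx eq_sym (negbTE i_neq_max) ltnn summxE (bigD1 (cv c)) //= !mxE eqxx.
by rewrite big1 ?addr0 // => j /negbTE j_neq; rewrite mxE j_neq.
Qed.

(* Transposing z0 with an entry of y moves z0 into y, killing that row. *)
Lemma pattern_det_swap_mem (y : seq 'I_n) j : size y = k -> j \in y ->
  pattern_det (map (tperm z0 j) y) = 0.
Proof.
move=> sy jy; have jk : (index j y < k)%N by rewrite -sy index_mem.
by apply: (pattern_det_z0 jk); rewrite (nth_map z0) ?sy // nth_index // tpermR.
Qed.

(* If z0 occurs in y, only the transpositions with points outside y act
   nontrivially, and they produce every substitution of that entry. *)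
Lemma pattern_det_swap_sum_mem (y : seq 'I_n) : uniq y -> size y = k -> z0 \in y ->
  \sum_(j | j \notin y) pattern_det (map (tperm z0 j) y) = 0.
Proof.
move=> uy sy z0y; set i := index z0 y.
have ik : (i < k)%N by rewrite -sy index_mem.
have yi : nth z0 y i = z0 := nth_index z0 z0y.
transitivity (\sum_(j | j \notin y) pattern_det (set_nth z0 y i j)).
  by apply: eq_bigr => j jy; rewrite -{1}yi map_tperm_set_nth ?sy.
have := pattern_det_subst_sum y ik; rewrite (bigID (mem y)) /= big1 ?add0r // => j jy.
have [->|j_neq_z0] := eqVneq j z0.
  by apply: (pattern_det_z0 ik); rewrite nth_set_nth /= eqxx.
have jk : (index j y < k)%N by rewrite -sy index_mem.
have ij : i != index j y.
  by apply/eqP => i_eq; move: j_neq_z0; rewrite -yi i_eq nth_index ?eqxx.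
apply: (pattern_det_rep ij ik jk).
by rewrite !nth_set_nth /= eqxx eq_sym (negbTE ij) nth_index.
Qed.

(* If z0 does not occur in y, the transpositions with points outside y fix
   y, and there are n - k - 1 of them. *)
Lemma pattern_det_swap_sum_fresh (y : seq 'I_n) : uniq y -> size y = k -> z0 \notin y ->
  \sum_(j | (j != z0) && (j \notin y)) pattern_det (map (tperm z0 j) y)
    = (n - k - 1)%:R * pattern_det y.
Proof.
move=> uy sy z0Ny; rewrite (eq_bigr (fun=> pattern_det y)) => [|j /andP[jz jy]].
  rewrite sumr_const mulr_natl; congr (_ *+ _).
  have -> : #|[pred j | (j != z0) && (j \notin y)]| = #|~: (z0 |: [set v in y])|.
    by apply: eq_card => j; rewrite !inE negb_or.
  have := cardsC (z0 |: [set v in y]); rewrite cardsU1 inE z0Ny cardsE card_ord.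
  by move/card_uniqP: uy; rewrite sy => ->; lia.
congr pattern_det; apply: map_id_in => v vy; apply: tpermD.
  by apply: contraNneq z0Ny => ->.
by apply: contraNneq jy => ->.
Qed.

Lemma pattern_det_swap_sum (y : seq 'I_n) : uniq y -> size y = k ->
  \sum_(j | j != z0) pattern_det (map (tperm z0 j) y) = (n - k - 1)%:R * pattern_det y.
Proof.
move=> uy sy; rewrite (bigID (mem y)) /= big1 ?add0r => [|j /andP[_ jy]]; last first.
  exact: pattern_det_swap_mem.
have [z0y | z0Ny] := boolP (z0 \in y); last exact: pattern_det_swap_sum_fresh.
rewrite (pattern_det_z0 (r := index z0 y)) ?nth_index ?mulr0 -?sy ?index_mem //.
rewrite -[RHS](pattern_det_swap_sum_mem uy sy z0y); apply: eq_bigl => j.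
by apply/andb_idl; apply: contraNneq => ->.
Qed.

End PatternDeterminant.

Section EnumerationSums.
Local Open Scope ring_scope.

Lemma sum_enum_val_pick (T : finType) (R : nzSemiRingType) (A : {set T})
    (G : T -> R) t :
  t \in A -> \sum_(x < #|A|) G (enum_val x) * (enum_val x == t)%:R = G t.
Proof.
move=> tA; rewrite -(big_enum_val (fun x => G x * (x == t)%:R)) /=.
rewrite (bigD1 t) //= eqxx mulr1 big1 ?addr0 // => x /andP[_ /negbTE ->].
by rewrite mulr0.
Qed.

End EnumerationSums.

Section Adjacency.
Local Open Scope ring_scope.
Variables (n k : nat) (z0 : 'I_n).
Hypothesis z0_val : val z0 = 0%N.

Definition vertex_vec (f : k.-tuple 'I_n -> rat) : 'rV[rat]_#|vert n k| :=
  \row_x f (enum_val x).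

Lemma map_tperm_eq j (x y : k.-tuple 'I_n) :
  (map (tperm z0 j) x == y :> seq 'I_n) = (x == map_tuple (tperm z0 j) y).
Proof.
apply/eqP/eqP => [xy | ->]; last by rewrite /= mapK //; exact: tpermK.
by apply: val_inj; rewrite /= -xy mapK //; exact: tpermK.
Qed.

Lemma adjX_row_mul (f : k.-tuple 'I_n -> rat) :
  vertex_vec f *m adjX n k =
  \row_y \sum_(j | j != z0) f (map_tuple (tperm z0 j) (enum_val y)).
Proof.
apply/rowP => y; rewrite !mxE.
have vert_swap j : map_tuple (tperm z0 j) (enum_val y) \in vert n k.
  rewrite inE map_inj_uniq; last exact: perm_inj.
  by have := enum_valP y; rewrite inE.
under [RHS]eq_bigr => j _ do rewrite -(sum_enum_val_pick f (vert_swap j)).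
rewrite exchange_big /=; apply: eq_bigr => x _; rewrite !mxE /adj_entry.
rewrite (big_pred1 z0) => [|a]; last by rewrite /= -z0_val val_eqE.
rewrite natr_sum mulr_sumr; apply: eq_big => [j|j _]; first by rewrite -z0_val val_eqE.
by rewrite map_tperm_eq.
Qed.

Lemma pattern_det_eigen (cv : 'I_k.+1 -> 'I_n) : (forall c, cv c != z0) ->
  vertex_vec (pattern_det rat z0 cv) *m adjX n k
    = (n - k - 1)%:R *: vertex_vec (pattern_det rat z0 cv).
Proof.
move=> cv_neq0; rewrite adjX_row_mul; apply/rowP => y; rewrite !mxE.
have := enum_valP y; rewrite inE => uy.
by rewrite pattern_det_swap_sum // size_tuple.
Qed.

End Adjacency.

Section Family.
Local Open Scope ring_scope.
Variables (n k : nat) (z0 o1 : 'I_n).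
Hypotheses (z0_val : val z0 = 0%N) (o1_neq_z0 : o1 != z0).

Definition avoid : {set 'I_n} := ~: [set z0; o1].
Definition drawn : {set {set 'I_n}} :=
  [set S : {set 'I_n} | S \subset avoid & #|S| == k].

Lemma card_drawn : #|drawn| = 'C(n - 2, k).
Proof.
rewrite cards_draws; congr 'C(_, _).
have z0_neq_o1 : z0 != o1 by rewrite eq_sym.
have := cardsC [set z0; o1]; rewrite cards2 z0_neq_o1 card_ord /avoid => /= h.
by set m := #|_| in h *; rewrite -h addKn.
Qed.

(* The column labels attached to S: the elements of S in order, then o1. *)
Definition subset_cv (S : {set 'I_n}) (c : 'I_k.+1) : 'I_n := nth o1 (enum S) c.

Lemma subset_cv_cases (S : {set 'I_n}) (c : 'I_k.+1) :
  subset_cv S c = o1 \/ subset_cv S c \in S.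
Proof.
rewrite /subset_cv; case: (ltnP c (size (enum S))) => cS.
  by right; rewrite -mem_enum mem_nth.
by left; rewrite nth_default.
Qed.

Lemma subset_cv_neq0 (S : {set 'I_n}) (c : 'I_k.+1) :
  S \subset avoid -> subset_cv S c != z0.
Proof.
move=> S_avoid; case: (subset_cv_cases S c) => [-> // | /(subsetP S_avoid)].
by rewrite !inE negb_or => /andP[].
Qed.

(* For S != T the pattern of S vanishes on T: some t in T \ S is not a
   column label of S. *)
Lemma pattern_det_other (S T : {set 'I_n}) :
  S \in drawn -> T \in drawn -> S != T ->
  pattern_det rat z0 (subset_cv S) (enum T) = 0.
Proof.
rewrite !inE => /andP[_ /eqP cardS] /andP[T_avoid /eqP cardT] ST.
have /subsetPn [t tT tNS] : ~~ (T \subset S).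
  by apply: contra ST => TS; rewrite eq_sym eqEcard TS cardS cardT leqnn.
have tk : (index t (enum T) < k)%N by rewrite -cardT cardE index_mem mem_enum.
apply: (pattern_det_out rat tk) => c; rewrite nth_index ?mem_enum //.
case: (subset_cv_cases S c) => [->|cS]; last by apply: contraNneq tNS => <-.
have := subsetP T_avoid t tT; rewrite !inE negb_or => /andP[_].
by rewrite eq_sym.
Qed.

(* On S itself the pattern matrix is lower unitriangular. *)
Lemma pattern_det_self (S : {set 'I_n}) :
  S \in drawn -> pattern_det rat z0 (subset_cv S) (enum S) = 1.
Proof.
rewrite inE => /andP[S_avoid /eqP cardS].
have sizeS : size (enum S) = k by rewrite -cardS cardE.
have o1NS : o1 \notin S by apply/negP => /(subsetP S_avoid); rewrite !inE eqxx orbT.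
have entry r c : (r < k)%N -> (nth z0 (enum S) r == subset_cv S c) = (r == c :> nat).
  move=> rk; rewrite /subset_cv; case: (ltnP c k) => ck.
    by rewrite (set_nth_default z0) ?sizeS // nth_uniq ?sizeS ?enum_uniq.
  rewrite [nth o1 _ _]nth_default ?sizeS // (ltn_eqF (leq_trans rk ck)).
  by apply: contraNF o1NS => /eqP <-; rewrite -mem_enum mem_nth ?sizeS.
rewrite /pattern_det det_trig.
  by apply: big1 => r _; rewrite mxE; case: ifP => // rk; rewrite entry ?eqxx.
apply/is_trig_mxP => r c rc; rewrite mxE.
case: ifP => rk; first by rewrite entry // ltn_eqF.
by have := ltn_ord c; move/negbT: rk; lia.
Qed.

(* The k-subsets of the points other than z0 and o1 give independent pattern
   eigenvectors W: evaluated (through P) at the vertices enum T they form the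
   identity matrix, so the eigenspace has dimension at least 'C(n - 2, k). *)
Lemma eigenspace_rank :
  ('C(n - 2, k) <= \rank (eigenspace (adjX n k) (n - k - 1)%:R))%N.
Proof.
pose W : 'M[rat]_(#|drawn|, #|vert n k|) :=
  \matrix_(i < #|drawn|) vertex_vec (pattern_det rat z0 (subset_cv (enum_val i))).
pose tuple_of (S : {set 'I_n}) : k.-tuple 'I_n := insubd (nseq_tuple k z0) (enum S).
pose P : 'M[rat]_(#|vert n k|, #|drawn|) :=
  \matrix_(x, i) (enum_val x == tuple_of (enum_val i))%:R.
have W_eigen : (W <= eigenspace (adjX n k) (n - k - 1)%:R)%MS.
  apply/row_subP => i; rewrite rowK; apply/eigenspaceP/pattern_det_eigen => // c.
  by apply: subset_cv_neq0; have := enum_valP i; rewrite inE => /andP[].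
have tuple_ofE S : S \in drawn -> val (tuple_of S) = enum S.
  by rewrite inE => /andP[_ /eqP cardS]; rewrite val_insubd -cardE cardS eqxx.
have WP1 : W *m P = 1%:M.
  apply/matrixP => i i'; rewrite !mxE; have drawn_i' := enum_valP i'.
  under eq_bigr do rewrite !mxE.
  rewrite (sum_enum_val_pick (pattern_det rat z0 (subset_cv (enum_val i)) \o val));
    last by rewrite inE tuple_ofE // enum_uniq.
  rewrite /= tuple_ofE //; have [-> | ii'] := eqVneq i i'.
    by rewrite pattern_det_self.
  by rewrite pattern_det_other ?enum_valP // (inj_eq enum_val_inj).
rewrite -card_drawn -(mxrank1 rat #|drawn|) -WP1.
exact: leq_trans (mxrankM_maxl W P) (mxrankS W_eigen).
Qed.

End Family.

Theorem mainTheorem10 (n k : nat) :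
  (3 <= n)%N -> (1 <= k)%N -> (k <= n - 2)%N ->
  ('C(n - 2, k) <= \rank (eigenspace (adjX n k) (n - k - 1)%:R))%N.
Proof.
move=> n_ge3 _ _.
have n_gt0 : (0 < n)%N by apply: leq_trans n_ge3.
have n_gt1 : (1 < n)%N by apply: leq_trans n_ge3.
by apply: (@eigenspace_rank n k (Ordinal n_gt0) (Ordinal n_gt1)).
Qed.
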